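(* Suppose the path decomposition $P_0,\dots,P_k$ of $G$ is well defined (i.e. the uniqueness assumptions below hold). Then there is an index $i_0\le k$ such that $f(P_0)>f(P_1)>\dots>f(P_{i_0})>0=f(P_{i_0+1})=\dots=f(P_k)$.
   Context: Let $G=(N,E)$ be a finite connected undirected graph with distinct vertices $s_0,s_1$ and edge lengths $L_e>0$; the length $L(P)$ of a path is the sum of its edge lengths, and $\operatorname{dist}(v,s_1)$ is the shortest-path distance. Path decomposition: $P_0$ is the shortest $s_0$-$s_1$ path (assumed unique), $f(P_0)=1$, and $p^*_v=\operatorname{dist}(v,s_1)$ for $v\in P_0$. Inductively, for $i\ge1$, as long as some edge does not belong to $P_0\cup\dots\cup P_{i-1}$, let $\mathcal P$ be the set of paths $P$ in $G$ whose startpoint $a$ and endpoint $b$ lie on $P_0\cup\dots\cup P_{i-1}$ with $p^*_a\ge p^*_b$, none of whose interior vertices lies on $P_0\cup\dots\cup P_{i-1}$, and none of whose edges belongs to $P_0\cup\dots\cup P_{i-1}$; for such $P$ set $f(P)=(p^*_a-p^*_b)/L(P)$. Let $P_i=\arg\max_{P\in\mathcal P}f(P)$ (assumed unique unless the maximum value is $0$). If $p^*_a>p^*_b$, $P_i$ is directed from $a$ to $b$; otherwise its edges stay undirected. For every interior vertex $v$ of $P_i$ set $p^*_v=p^*_b+f(P_i)\operatorname{dist}_{P_i}(v,b)$, where $\operatorname{dist}_{P_i}$ is distance along $P_i$; for edges $e$ of $P_i$ set $r_e=f(P_i)-1$ (and $r_e=0$ for $e\in P_0$). The process stops with $P_k$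 when all edges are covered. *)

From HB Require Import structures.
From mathcomp Require Import all_boot all_order all_algebra.
Set Implicit Arguments. Unset Strict Implicit. Unset Printing Implicit Defensive.
Import Order.TTheory GRing.Theory Num.Theory.
Local Open Scope ring_scope.

(* A finite undirected (multi)graph: vertex type V, edge type E, each edge e
   joins the two vertices [src e] and [tgt e] (the orientation src/tgt is an
   arbitrary labelling and plays no role: walks may use an edge both ways). *)
Section PathDecomposition.
Variables (R : realFieldType) (V E : finType) (src tgt : E -> V) (L : E -> R).

Definition nextv (x : V) (e : E) : V := if src e == x then tgt e else src e.

Fixpoint walk_ok (x : V) (es : seq E) : bool :=
  match es with
  | [::] => true
  | e :: es' => ((src e == x) || (tgt e == x)) && walk_ok (nextv x e) es'
  end.

Definition verts (x : V) (es : seq E) : seq V := x :: scanl nextv x es.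
Definition endp (x : V) (es : seq E) : V := last x (scanl nextv x es).
Definition interior (x : V) (es : seq E) : seq V :=
  behead (belast x (scanl nextv x es)).

Definition len (es : seq E) : R := \sum_(e <- es) L e.

Definition is_path (x : V) (es : seq E) : bool :=
  [&& walk_ok x es, uniq (verts x es) & (0 < size es)%N].

Fixpoint seqs_upto (n : nat) : seq (seq E) :=
  match n with
  | 0 => [:: [::]]
  | n'.+1 => [::] :: [seq e :: s | e <- enum E, s <- seqs_upto n']
  end.

(* minimum of a list of reals (0 for the empty list) *)
Definition minl (l : seq R) : R := foldr Num.min (head 0 l) l.

(* Since all
   lengths are positive, a shortest walk never repeats a vertex, so it is
   enough to minimise over walks with at most #|V| edges. *)
Definition dist (u v : V) : R :=
  minl [seq len es | es <- seqs_upto #|V| & walk_ok u es && (endp u es == v)].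

Definition connected : Prop :=
  forall u v : V, exists es, walk_ok u es /\ endp u es = v.

Definition gpath := (V * seq E)%type.
Definition startp (P : gpath) : V := P.1.
Definition endpt (P : gpath) : V := endp P.1 P.2.

Definition coveredV (Ps : seq gpath) : seq V :=
  flatten [seq verts P.1 P.2 | P <- Ps].
Definition coveredE (Ps : seq gpath) : seq E :=
  flatten [seq P.2 | P <- Ps].

Definition fval (p : V -> R) (P : gpath) : R :=
  (p (startp P) - p (endpt P)) / len P.2.

Definition dist_along (P : gpath) (v : V) : R :=
  len (drop (index v (verts P.1 P.2)) P.2).

(* update of the potentials p* after adding the path P *)
Definition pstep (p : V -> R) (P : gpath) : V -> R :=
  fun v => if v \in interior P.1 P.2
           then p (endpt P) + fval p P * dist_along P v
           else p v.

(* the potential p* after the paths Ps = [:: P_0; ...; P_{i-1}] have been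
   chosen (P_0 is the shortest path, on which p*_v = dist(v, s1)) *)
Definition pot (s1 : V) (Ps : seq gpath) : V -> R :=
  foldl pstep (fun v => dist v s1) (behead Ps).

Definition candidate (Ps : seq gpath) (p : V -> R) (P : gpath) : bool :=
  [&& is_path P.1 P.2,
      startp P \in coveredV Ps, endpt P \in coveredV Ps,
      p (endpt P) <= p (startp P),
      all (fun v => v \notin coveredV Ps) (interior P.1 P.2) &
      all (fun e => e \notin coveredE Ps) P.2].

Definition fP (s1 : V) (Ps : seq gpath) (i : nat) : R :=
  if i == 0%N then 1
  else fval (pot s1 (take i Ps)) (nth (s1, [::]) Ps i).

Definition path_decomposition (s0 s1 : V) (Ps : seq gpath) : Prop :=
  (0 < size Ps)%N /\
  (let P0 := nth (s1, [::]) Ps 0 in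
     [/\ startp P0 = s0, endpt P0 = s1, is_path P0.1 P0.2,
         len P0.2 = dist s0 s1 &
         forall es, is_path s0 es -> endp s0 es = s1 ->
                    len es = dist s0 s1 -> es = P0.2]) /\
  (forall i, (0 < i < size Ps)%N ->
     let prev := take i Ps in
     let p := pot s1 prev in
     let Pi := nth (s1, [::]) Ps i in
     [/\ candidate prev p Pi,
         (forall Q, candidate prev p Q -> fval p Q <= fval p Pi) &
         (0 < fval p Pi ->
            forall Q, candidate prev p Q -> fval p Q = fval p Pi -> Q = Pi)]) /\
  (forall e : E, e \in coveredE Ps).

End PathDecomposition.

(* Write f_i = f(P_i).  We have f_0 = 1 and f_i >= 0 for every chosen path,
   since a candidate goes from a higher to a lower potential.  Two comparison
   facts then give the theorem by an elementary argument on real sequences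
   ([decreasing_until_zero]):

   - f_1 < f_0 ([first_step_lt1]).  On P_0 the potential is the remaining
     length along P_0.  A candidate q with slope >= 1 would either go backwards
     along P_0 or bypass a piece of P_0 by a path no longer than that piece;
     splicing q into P_0 then gives a second shortest s0-s1 path.

   - f_{i+1} <= f_i, strictly when f_i > 0 ([step_main]).  Let P = P_i have slope
     F.  Along P the new potential decreases linearly with slope F.  A new
     candidate Q from a to b with a real drop is extended at each end lying in
     the interior of P, backwards to the start of P or forwards to its end
     ([lext], [rext]).  The result C was already a candidate at stage i, differs
     from P, and its slope is a mediant of F and f(Q); so maximality and
     uniqueness of P bound f(Q) ([dominating_candidate]). *)

From HB Require Import structures.
From mathcomp Require Import all_boot all_order all_algebra.
From mathcomp Require Import zify ring lra.
Import Order.TTheory GRing.Theory Num.Theory.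
Local Open Scope ring_scope.

Set Implicit Arguments. Unset Strict Implicit. Unset Printing Implicit Defensive.

Lemma take_drop_disj (T : eqType) (s : seq T) i j v :
  uniq s -> (i <= j)%N -> v \in take i s -> v \notin drop j s.
Proof.
move=> us hij vi; have : uniq (take j s ++ drop j s) by rewrite cat_take_drop.
rewrite cat_uniq => /and3P[_ /hasPn h _]; apply/negP => vd.
by have := h v vd; rewrite -(take_takel s hij) in vi; rewrite (mem_take vi).
Qed.

Lemma index_drop_ge (T : eqType) (s : seq T) j v :
  uniq s -> v \in drop j s -> (j <= index v s)%N.
Proof.
move=> us vd; rewrite leqNgt; apply/negP => hlt.
have vs : v \in s by exact: mem_drop vd.
have vt : v \in take j s.
  by rewrite -(nth_index v vs) -(nth_take _ hlt) mem_nth // size_take_min leq_min hlt index_mem.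
by have := take_drop_disj us (leqnn j) vt; rewrite vd.
Qed.

Section Walks.
Variables (R : realFieldType) (V E : finType) (src tgt : E -> V) (L : E -> R).
Hypothesis Lpos : forall e, 0 < L e.

Local Notation nv := (nextv src tgt).
Local Notation wok := (walk_ok src tgt).
Local Notation vs := (verts src tgt).
Local Notation ep := (endp src tgt).
Local Notation intr := (interior src tgt).
Local Notation ln := (len L).
Local Notation ispath := (is_path src tgt).
Local Notation dst := (dist src tgt L).

Lemma endpE x es : ep x es = foldl nv x es.
Proof. by rewrite /endp; elim: es x => //= e es IH x; rewrite IH. Qed.

Lemma wok_cat x A B : wok x (A ++ B) = wok x A && wok (ep x A) B.
Proof. by rewrite endpE; elim: A x => //= e A IH x; rewrite IH andbA. Qed.

Lemma ep_cat x A B : ep x (A ++ B) = ep (ep x A) B.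
Proof. by rewrite !endpE foldl_cat. Qed.

Lemma vs_cat x A B : vs x (A ++ B) = vs x A ++ behead (vs (ep x A) B).
Proof. by rewrite /verts scanl_cat endpE. Qed.

Lemma size_vs x es : size (vs x es) = (size es).+1.
Proof. by rewrite /= size_scanl. Qed.

Lemma vs_split x es : es != [::] -> vs x es = x :: rcons (intr x es) (ep x es).
Proof. by rewrite /verts /interior /endp; case: es => //= e es _; rewrite -lastI. Qed.

Lemma vs_take x es j : (j <= size es)%N -> vs x (take j es) = take j.+1 (vs x es).
Proof.
move=> hj; have := vs_cat x (take j es) (drop j es); rewrite cat_take_drop => ->.
have hs : size (vs x (take j es)) = j.+1 by rewrite size_vs size_takel.
by rewrite takel_cat ?hs // [RHS]take_oversize // hs.
Qed.

Lemma ep_take x es j : (j <= size es)%N -> ep x (take j es) = nth x (vs x es) j.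
Proof.
move=> hj; have -> : ep x (take j es) = last x (vs x (take j es)) by [].
rewrite vs_take // (last_nth x) size_takel ?size_vs //.
exact: (nth_take _ (ltnSn j)).
Qed.

Lemma vs_drop x es j : (j <= size es)%N ->
  vs (ep x (take j es)) (drop j es) = drop j (vs x es).
Proof.
move=> hj; have := vs_cat x (take j es) (drop j es).
rewrite cat_take_drop vs_take // -{1}(cat_take_drop j.+1 (vs x es)) => /eqP.
rewrite eqseq_cat ?size_take // => /andP[_ /eqP h2].
by rewrite (drop_nth x) ?size_vs // h2 -ep_take.
Qed.

Lemma wok_take x es j : wok x es -> wok x (take j es).
Proof. by rewrite -{1}(cat_take_drop j es) wok_cat => /andP[]. Qed.

Lemma wok_drop x es j : wok x es -> wok (ep x (take j es)) (drop j es).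
Proof. by rewrite -{1}(cat_take_drop j es) wok_cat => /andP[]. Qed.

Lemma ep_drop x es j : ep (ep x (take j es)) (drop j es) = ep x es.
Proof. by rewrite -ep_cat cat_take_drop. Qed.

Lemma take_vs_sub x es j v : v \in vs x (take j es) -> v \in vs x es.
Proof.
case: (leqP j (size es)) => h; first by rewrite vs_take // => /mem_take.
by rewrite take_oversize // ltnW.
Qed.

Lemma nth_index_vs x es v : v \in vs x es ->
  (index v (vs x es) <= size es)%N /\ v = nth x (vs x es) (index v (vs x es)).
Proof. by move=> vi; rewrite nth_index // -ltnS -(size_vs x es) index_mem. Qed.

Lemma mem_intr x es v : es != [::] -> uniq (vs x es) ->
  (v \in intr x es) = [&& v \in vs x es, v != x & v != ep x es].
Proof.
move=> ne; rewrite vs_split // /= mem_rcons in_cons rcons_uniq negb_or.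
case/and3P=> /andP[_ xI] wI _; rewrite in_cons mem_rcons in_cons.
have [->|_] := eqVneq v x; first by rewrite (negbTE xI).
by have [->|_] := eqVneq v (ep x es); rewrite ?(negbTE wI) ?andbF ?andbT.
Qed.

Lemma take_vs_intr x es j v : uniq (vs x es) -> (j < size es)%N ->
  v \in take j.+1 (vs x es) -> v != x -> v \in intr x es.
Proof.
move=> u hj vt vx; have ne : es != [::] by case: (es) hj.
rewrite mem_intr // vx (mem_take vt) /=.
have hd : drop (size es) (vs x es) = [:: ep x es] by rewrite -vs_drop // take_size drop_size.
by apply: contraTneq vt => ->; apply/negP => /(take_drop_disj u hj); rewrite hd mem_head.
Qed.

Lemma drop_vs_intr x es j v : uniq (vs x es) -> (0 < j)%N -> (j <= size es)%N ->
  v \in drop j (vs x es) -> v != ep x es -> v \in intr x es.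
Proof.
move=> u hj hj' vd vw; have ne : es != [::] by case: (es) hj'; rewrite ?leqn0 => // /eqP j0; rewrite j0 in hj.
rewrite mem_intr // vw (mem_drop vd) andbT.
apply: contraTneq vd => ->; apply: (take_drop_disj u hj).
by rewrite /verts /= mem_head.
Qed.

Lemma len_nil : ln [::] = 0.
Proof. by rewrite /len big_nil. Qed.

Lemma len_cat A B : ln (A ++ B) = ln A + ln B.
Proof. by rewrite /len big_cat. Qed.

Lemma len_take_drop es j : ln es = ln (take j es) + ln (drop j es).
Proof. by rewrite -len_cat cat_take_drop. Qed.

Lemma len_ge0 A : 0 <= ln A.
Proof. by rewrite /len; apply: sumr_ge0 => e _; apply: ltW. Qed.

Lemma len_gt0 A : (0 < size A)%N -> 0 < ln A.
Proof. by case: A => // e A _; rewrite /len big_cons ltr_wpDr ?len_ge0. Qed.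

Lemma len_drop_le es i j : (i <= j)%N -> ln (drop j es) <= ln (drop i es).
Proof.
move=> hij; rewrite (len_take_drop (drop i es) (j - i)) drop_drop subnK //.
by rewrite lerDr len_ge0.
Qed.

(* Removing the closed sub-walks between repeated vertices turns any walk into
   one with distinct vertices, the same ends and no greater length. *)
Lemma shorten x es : wok x es -> exists es',
  [/\ wok x es', ep x es' = ep x es, uniq (vs x es') & ln es' <= ln es].
Proof.
move: {2}(size es) (leqnn (size es)) => n; elim: n es => [|n IH] es hs w.
  by move: hs; rewrite leqn0 => /nilP ->; exists [::].
have [u|] := boolP (uniq (vs x es)); first by exists es.
case/(uniqPn x) => i [j [hij hj he]]; rewrite size_vs ltnS in hj.
have hi : (i <= size es)%N by apply: ltnW; apply: leq_trans hj.
have eij : ep x (take i es) = ep x (take j es) by rewrite !ep_take.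
set es' := take i es ++ drop j es.
have w' : wok x es' by rewrite wok_cat wok_take //= eij wok_drop.
have s' : (size es' <= n)%N by rewrite size_cat size_takel // size_drop; lia.
have [es'' [w'' e'' u'' l'']] := IH es' s' w'.
exists es''; split => //; first by rewrite e'' ep_cat eij ep_drop.
apply: (le_trans l''); rewrite len_cat [X in _ <= X](len_take_drop es i) lerD2l.
rewrite (len_take_drop (drop i es) (j - i)) drop_drop subnK ?(ltnW hij) //.
by rewrite lerDr len_ge0.
Qed.

Lemma minl_le (l : seq R) x : x \in l -> minl l <= x.
Proof.
rewrite /minl; move: (head 0 l) => h; elim: l => //= y l IH.
by rewrite in_cons ge_min => /orP[/eqP->|/IH->]; rewrite ?lexx ?orbT.
Qed.

Lemma minl_in (l : seq R) : l != [::] -> minl l \in l.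
Proof.
case: l => // y l _; rewrite /minl /=.
have : foldr Num.min y l \in y :: l.
  elim: l => [|z l IH] /=; first by rewrite mem_head.
  rewrite minEle; case: ifP => _; first by rewrite !in_cons eqxx orbT.
  by move: IH; rewrite !in_cons => /orP[->|->]; rewrite ?orbT.
by rewrite minEle; case: ifP; rewrite ?mem_head.
Qed.

(* The distance is attained and bounds the length of every walk: walks with
   distinct vertices have at most #|V| edges, hence are enumerated by [seqs_upto]. *)

Lemma mem_seqs n (s : seq E) : (size s <= n)%N -> s \in seqs_upto E n.
Proof.
elim: n s => [|n IH] [|e s] //= hs; rewrite in_cons; apply/orP; right.
by apply: (allpairs_f (fun e s => e :: s)); [rewrite mem_enum | exact: IH].
Qed.

Lemma size_uniq_vs u es : uniq (vs u es) -> (size es <= #|V|)%N.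
Proof.
move=> uv; have := uniq_leq_size uv (fun y _ => mem_enum V y).
by rewrite size_vs -cardE => /ltnW.
Qed.

Lemma dist_le u v es : wok u es -> ep u es = v -> dst u v <= ln es.
Proof.
move=> w e; have [es' [w' e' u' l']] := shorten w; apply: le_trans l'.
by apply/minl_le/map_f; rewrite mem_filter w' e' e eqxx mem_seqs // (size_uniq_vs u').
Qed.

Lemma dist_attained u v es : wok u es -> ep u es = v -> exists es',
  [/\ wok u es', ep u es' = v & dst u v = ln es'].
Proof.
move=> w e; have [es0 [w0 e0 u0 _]] := shorten w.
set l := [seq ln es | es <- seqs_upto E #|V| & wok u es && (ep u es == v)].
have : l != [::].
  suff : ln es0 \in l by case: (l).
  by apply: map_f; rewrite mem_filter w0 e0 e eqxx mem_seqs // (size_uniq_vs u0).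
move=> /minl_in; rewrite /dist -/l => /mapP[es1].
by rewrite mem_filter => /andP[/andP[w1 /eqP e1] _] ->; exists es1.
Qed.

Lemma splice x A a q B : wok x A -> ep x A = a -> uniq (vs x A) ->
  ispath a q -> wok (ep a q) B -> uniq (vs (ep a q) B) ->
  (forall v, v \in vs x A -> v \notin vs (ep a q) B) ->
  (forall v, v \in intr a q -> (v \notin vs x A) && (v \notin vs (ep a q) B)) ->
  [/\ ispath x (A ++ q ++ B), ep x (A ++ q ++ B) = ep (ep a q) B &
     forall v, v \in vs x (A ++ q ++ B) ->
       [|| v \in vs x A, v \in intr a q | v \in vs (ep a q) B]].
Proof.
move=> wA eA uA /and3P[wq uq sq] wB uB dAB dQ.
have qne : q != [::] by case: (q) sq.
set b := ep a q in wB uB dAB dQ *.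
have hV : vs x (A ++ q ++ B) = vs x A ++ (rcons (intr a q) b ++ behead (vs b B)).
  by rewrite vs_cat eA vs_cat (vs_split a qne).
have bB : b \in vs b B by rewrite mem_head.
move: uq; rewrite (vs_split a qne) /= => /andP[_ uQ].
move: (uB); rewrite /= => /andP[bnB usB].
split.
- rewrite /is_path wok_cat wA eA wok_cat wq wB hV !size_cat !addn_gt0 sq orTb orbT.
  rewrite cat_uniq uA /= andbT; apply/andP; split.
    apply/hasPn => v; rewrite mem_cat mem_rcons in_cons => /orP[/orP[/eqP->|vi]|vs'].
    + by apply/negP => /dAB; rewrite bB.
    + by case/andP: (dQ v vi).
    + by apply/negP => /dAB; rewrite /= in_cons vs' orbT.
  rewrite cat_uniq uQ usB andbT; apply/hasPn => v vs'.
  rewrite mem_rcons in_cons negb_or; apply/andP; split.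
    by apply: contraTneq vs' => ->.
  by apply/negP => /dQ /andP[_]; rewrite /= in_cons vs' orbT.
- by rewrite ep_cat eA ep_cat.
- move=> v; rewrite hV !mem_cat mem_rcons in_cons.
  case/orP=> [->//|/orP[/orP[/eqP->|->]|/mem_behead->]]; by rewrite ?bB ?orbT.
Qed.

Lemma candidate_fval_ge0 prev (p : V -> R) Q :
  candidate src tgt prev p Q -> 0 <= fval src tgt L p Q.
Proof.
case/and5P=> /and3P[_ _ sz] _ _ hle _.
by rewrite divr_ge0 ?subr_ge0 // ltW // len_gt0.
Qed.

Lemma covV_rcons (prev : seq (gpath V E)) P :
  coveredV src tgt (rcons prev P) = coveredV src tgt prev ++ vs P.1 P.2.
Proof. by rewrite /coveredV -cats1 map_cat flatten_cat /= cats0. Qed.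

Lemma covE_rcons (prev : seq (gpath V E)) P :
  coveredE (rcons prev P) = coveredE prev ++ P.2.
Proof. by rewrite /coveredE -cats1 map_cat flatten_cat /= cats0. Qed.

Section FirstStep.
Variables (s0 s1 : V) (es0 : seq E).
Hypotheses (p0 : ispath s0 es0) (e0 : ep s0 es0 = s1) (l0 : ln es0 = dst s0 s1)
  (uq0 : forall es, ispath s0 es -> ep s0 es = s1 -> ln es = dst s0 s1 -> es = es0).

Local Notation VP0 := (vs s0 es0).

Lemma dist_on_P0 j : (j <= size es0)%N -> dst (nth s0 VP0 j) s1 = ln (drop j es0).
Proof.
move=> hj; case/and3P: p0 => w0 _ _; rewrite -ep_take //.
apply/le_anti; rewrite dist_le ?wok_drop ?ep_drop //=.
have [w [ww ew ->]] := dist_attained (wok_drop j w0) (etrans (ep_drop s0 es0 j) e0).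
have := @dist_le s0 s1 (take j es0 ++ w).
rewrite wok_cat wok_take // ww ep_cat ew -l0 len_cat => /(_ isT erefl).
by rewrite (len_take_drop es0 j) lerD2l.
Qed.

(* No shortcut: a path q from the ja-th to a later jb-th vertex of P_0, with no
   interior vertex and no edge on P_0, is strictly longer than the part of P_0
   it bypasses; otherwise splicing q into P_0 would give a second shortest path. *)
Lemma P0_no_shortcut a q ja jb : (ja < jb <= size es0)%N ->
  nth s0 VP0 ja = a -> nth s0 VP0 jb = ep a q -> ispath a q ->
  {in intr a q, forall v, v \notin VP0} -> {in q, forall e, e \notin es0} ->
  ln (drop ja es0) - ln (drop jb es0) < ln q.
Proof.
case/andP=> hj hjb ea eb pq iq eq; have hja := ltnW (leq_trans hj hjb).
case/and3P: (p0) => w0 u0 _.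
rewrite ltNge; apply/negP => hle.
have eA : ep s0 (take ja es0) = a by rewrite ep_take.
have eB : ep a q = ep s0 (take jb es0) by rewrite ep_take.
have uA : uniq (vs s0 (take ja es0)) by rewrite vs_take // take_uniq.
have wB : wok (ep a q) (drop jb es0) by rewrite eB wok_drop.
have uB : uniq (vs (ep a q) (drop jb es0)) by rewrite eB vs_drop // drop_uniq.
have dAB : forall v, v \in vs s0 (take ja es0) -> v \notin vs (ep a q) (drop jb es0).
  by move=> v; rewrite eB vs_drop // vs_take //; apply: take_drop_disj.
have dQ : forall v, v \in intr a q ->
    (v \notin vs s0 (take ja es0)) && (v \notin vs (ep a q) (drop jb es0)).
  move=> v /iq vn; apply/andP; split; apply: contra vn; first exact: take_vs_sub.
  by rewrite eB vs_drop // => /mem_drop.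
have [pC eC _] := splice (wok_take _ w0) eA uA pq wB uB dAB dQ.
rewrite eB ep_drop e0 in eC.
have short : ln (take ja es0 ++ q ++ drop jb es0) <= dst s0 s1.
  by rewrite -l0 (len_take_drop es0 ja) !len_cat lerD2l -lerBrDr.
have eqC : take ja es0 ++ q ++ drop jb es0 = es0.
  by apply: uq0 => //; apply/le_anti; rewrite short dist_le //; case/and3P: pC.
have [e qe] : exists e, e \in q by case/and3P: pq => _ _; case: (q) => // e ? _; exists e; rewrite mem_head.
by have := eq e qe; rewrite -eqC !mem_cat qe orbT.
Qed.

Lemma first_step_lt1 Q : candidate src tgt [:: (s0, es0)] (fun v => dst v s1) Q ->
  fval src tgt L (fun v => dst v s1) Q < 1.
Proof.
case: Q => a q; rewrite /candidate /coveredV /coveredE /= !cats0 /startp /endpt /=.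
case/and5P=> pq aV bV _ /andP[/allP iq /allP eq].
have lq : 0 < ln q by apply: len_gt0; case/and3P: pq.
rewrite /fval /startp /endpt /= ltr_pdivrMr // mul1r.
have [ha ea] := nth_index_vs aV; have [hb eb] := nth_index_vs bV.
rewrite {1}ea {1}eb !dist_on_P0 //.
case: (leqP (index (ep a q) VP0) (index a VP0)) => hj.
  by apply: le_lt_trans lq; rewrite subr_le0 len_drop_le.
by apply: P0_no_shortcut; rewrite ?hj ?hb -?ea -?eb.
Qed.

End FirstStep.

Section InductiveStep.
Variables (prev : seq (gpath V E)) (p : V -> R) (u : V) (es : seq E).
Local Notation cand := (candidate src tgt).
Local Notation fv := (fval src tgt L).
Local Notation covV := (coveredV src tgt prev).
Local Notation covE := (coveredE prev).
Local Notation F := (fval src tgt L p (u, es)).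
Local Notation p' := (pstep src tgt L p (u, es)).
Local Notation w := (ep u es).
Local Notation VP := (vs u es).
Local Notation I := (intr u es).

Hypotheses (cP : cand prev p (u, es))
  (P_max : forall C, cand prev p C -> fv p C <= F)
  (P_unique : 0 < F -> forall C, cand prev p C -> fv p C = F -> C = (u, es)).

Lemma cP_facts : [/\ ispath u es, u \in covV, w \in covV, p w <= p u &
  {in I, forall v, v \notin covV} /\ {in es, forall e, e \notin covE}].
Proof. by case/and5P: cP => h1 h2 h3 h4 /andP[/allP h5 /allP h6]. Qed.

Lemma es_ne : es != [::].
Proof. by have [/and3P[_ _]] := cP_facts; case: (es). Qed.

Lemma VP_uniq : uniq VP.
Proof. by have [/and3P[]] := cP_facts. Qed.

Lemma F_ge0 : 0 <= F.
Proof. exact: candidate_fval_ge0 cP. Qed.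

Lemma pu_eq : p u = p w + F * ln es.
Proof.
have lP : ln es != 0 by rewrite gt_eqF // len_gt0 // lt0n size_eq0 es_ne.
by rewrite /fval /= mulrC mulrCA mulfV // mulr1 addrC subrK.
Qed.

Lemma p'_out v : v \notin I -> p' v = p v.
Proof. by move=> h; rewrite /pstep /= (negbTE h). Qed.

Lemma p'_in v : v \in I -> p' v = p w + F * ln (drop (index v VP) es).
Proof. by move=> h; rewrite /pstep /= h. Qed.

Lemma intr_index v : v \in I ->
  [/\ v \in VP, (0 < index v VP)%N & (index v VP < size es)%N].
Proof.
move=> vI; have := vI; rewrite mem_intr ?es_ne ?VP_uniq // => /and3P[vV vu vw].
have [hl e] := nth_index_vs vV; split => //.
- by rewrite lt0n; apply: contra vu => /eqP h; rewrite e h.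
- by rewrite ltn_neqAle hl andbT; apply: contra vw => /eqP h; rewrite e h -ep_take // take_size.
Qed.

Lemma covered_out v : v \in covV ++ VP -> v \notin I -> v \in covV.
Proof.
have [_ hu hw _ _] := cP_facts.
rewrite mem_cat => /orP[//|vV]; rewrite mem_intr ?es_ne ?VP_uniq // vV /=.
by rewrite negb_and !negbK => /orP[/eqP->|/eqP->].
Qed.

Lemma pot_on_VP v : v \in VP -> p' v = p w + F * ln (drop (index v VP) es).
Proof.
move=> vV; have [vI|vI] := boolP (v \in I); first exact: p'_in.
rewrite p'_out //; move: vI; rewrite mem_intr ?es_ne ?VP_uniq // vV andTb.
rewrite negb_and !negbK => /orP[/eqP->|/eqP->]; first by rewrite index_head drop0 -pu_eq.
by rewrite {2}/endp (index_last VP_uniq) size_scanl drop_size len_nil mulr0 addr0.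
Qed.

Lemma pot_VP_mono v1 v2 : v1 \in VP -> v2 \in VP ->
  (index v1 VP <= index v2 VP)%N -> p' v2 <= p' v1.
Proof.
move=> v1V v2V hle; rewrite !pot_on_VP // lerD2l.
by rewrite ler_wpM2l ?F_ge0 ?len_drop_le.
Qed.

Record lext (x : V) (A : seq E) (a : V) : Prop := LExt {
  lext_walk : wok x A;
  lext_end : ep x A = a;
  lext_uniq : uniq (vs x A);
  lext_start : x \in covV;
  lext_sub : {subset vs x A <= covV ++ VP};
  lext_fresh : {in vs x A, forall v, v != x -> v \notin covV};
  lext_edges : {subset A <= es};
  lext_pot : p x - p' a = F * ln A;
  lext_pot_ge : {in vs x A, forall v, p' a <= p' v} }.

Record rext (b : V) (B : seq E) : Prop := RExt {
  rext_walk : wok b B;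
  rext_uniq : uniq (vs b B);
  rext_end : ep b B \in covV;
  rext_sub : {subset vs b B <= covV ++ VP};
  rext_fresh : {in vs b B, forall v, v != ep b B -> v \notin covV};
  rext_edges : {subset B <= es};
  rext_pot : p' b - p (ep b B) = F * ln B;
  rext_pot_le : {in vs b B, forall v, p' v <= p' b} }.

Lemma exists_lext a : a \in covV ++ VP -> exists x A, lext x A a.
Proof.
move=> aC; have [/and3P[wP _ _] uC _ _ [fI _]] := cP_facts.
have [aI|aI] := boolP (a \in I); last first.
  exists a, [::]; split => //; try by move=> v; rewrite mem_seq1 => /eqP->; rewrite ?eqxx.
  - exact: covered_out.
  - by rewrite p'_out // subrr len_nil mulr0.
have [aV _ haS] := intr_index aI; have [hja ea] := nth_index_vs aV.
set ja := index a VP in haS hja ea *.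
exists u, (take ja es); split => //.
- exact: wok_take.
- by rewrite ep_take // -ea.
- by rewrite vs_take // take_uniq // VP_uniq.
- by move=> v /take_vs_sub vV; rewrite mem_cat vV orbT.
- by move=> v; rewrite vs_take // => vt vu; apply/fI/(take_vs_intr VP_uniq haS vt vu).
- by move=> e /mem_take.
- by rewrite pot_on_VP // pu_eq (len_take_drop es ja); ring.
- move=> v; rewrite vs_take // => vt; apply: pot_VP_mono => //; first exact: mem_take vt.
  by rewrite -ltnS index_ltn.
Qed.

Lemma exists_rext b : b \in covV ++ VP -> exists B, rext b B.
Proof.
move=> bC; have [/and3P[wP _ _] _ wC _ [fI _]] := cP_facts.
have [bI|bI] := boolP (b \in I); last first.
  exists [::]; split => //; try by move=> v; rewrite mem_seq1 => /eqP->; rewrite ?eqxx.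
  - exact: covered_out.
  - by rewrite p'_out // subrr len_nil mulr0.
have [bV hb0 hbS] := intr_index bI; have [hjb eb] := nth_index_vs bV.
set jb := index b VP in hb0 hbS hjb eb *.
have eb' : ep u (take jb es) = b by rewrite ep_take // -eb.
have hvs : vs b (drop jb es) = drop jb VP by rewrite -eb' vs_drop.
have hend : ep b (drop jb es) = w by rewrite -eb' ep_drop.
exists (drop jb es); split; rewrite ?hvs ?hend //.
- by rewrite -eb' wok_drop.
- by rewrite drop_uniq // VP_uniq.
- by move=> v /mem_drop vV; rewrite mem_cat vV orbT.
- by move=> v vd vw; apply/fI/(drop_vs_intr VP_uniq hb0 hjb vd vw).
- by move=> e /mem_drop.
- by rewrite p'_in // addrC addKr.
- move=> v vd; apply: pot_VP_mono => //; first exact: mem_drop vd.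
  exact: index_drop_ge VP_uniq vd.
Qed.

(* The heart of the step: a stage-(i+1) candidate Q from a to b with
   p'(b) < p'(a), extended at both ends, becomes a stage-i candidate C different
   from P; the slope of C is a mediant of F and f(Q). *)
Lemma dominating_candidate a q x A B :
  ispath a q -> {in intr a q, forall v, v \notin covV ++ VP} ->
  {in q, forall e, e \notin covE ++ es} -> p' (ep a q) < p' a ->
  lext x A a -> rext (ep a q) B ->
  exists C, [/\ cand prev p C, C != (u, es),
    (fv p C <= F -> fv p' (a, q) <= F) & (fv p' (a, q) = F -> fv p C = F)].
Proof.
set b := ep a q => pq iq eq hab [wA eA uA xC sA fA edA potA geA].
case=> wB uB yC sB fB edB potB leB.
have dAB : forall v, v \in vs x A -> v \notin vs b B.
  move=> v vA; apply/negP => vB.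
  by have := le_trans (geA v vA) (leB v vB); rewrite leNgt hab.
have dQ : forall v, v \in intr a q -> (v \notin vs x A) && (v \notin vs b B).
  by move=> v /iq vn; rewrite (contra (sA v)) ?(contra (sB v)).
have [pC eC vC] := splice wA eA uA pq wB uB dAB dQ.
have [_ _ _ _ [_ freshE]] := cP_facts.
set y := ep b B in yC fB potB eC *.
have [e qe] : exists e, e \in q.
  by case/and3P: pq => _ _; case: (q) => // e' ? _; exists e'; rewrite mem_head.
have lq : 0 < ln q by apply: len_gt0; case/and3P: pq.
have lA := len_ge0 A; have lB := len_ge0 B; have F0 := F_ge0.
set f := fv p (u, es) in potA potB F0 *.
have lC : 0 < ln A + (ln q + ln B) by lra.
exists (x, A ++ q ++ B); split.
- rewrite /candidate /= /startp /endpt /= eC pC xC yC /=; apply/and3P; split.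
  + by have := mulr_ge0 F0 lA; have := mulr_ge0 F0 lB; lra.
  + apply/allP => v vi; have Cne : A ++ q ++ B != [::] by case: (A) => //; case: (q) qe.
    move: vi; case/and3P: pC => _ uC _; rewrite mem_intr // eC => /and3P[vV vx vy].
    case/or3P: (vC v vV) => [va|vq|vb]; [exact: fA | | exact: fB].
    by have := iq v vq; rewrite mem_cat negb_or => /andP[].
  + apply/allP => e'; rewrite !mem_cat => /or3P[ea|eqq|eb]; [exact/freshE/edA | | exact/freshE/edB].
    by have := eq e' eqq; rewrite mem_cat negb_or => /andP[].
- by apply/negP => /eqP[_ eqC]; have := eq e qe; rewrite -eqC !mem_cat qe !orbT.
- rewrite /fval /= /startp /endpt /= -/b eC !len_cat => h.
  by rewrite ler_pdivrMr // in h; rewrite ler_pdivrMr //; lra.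
- rewrite /fval /= /startp /endpt /= -/b eC !len_cat => h.
  have hq : p' a - p' b = f * ln q by rewrite -h mulrC mulrCA mulfV ?mulr1 // gt_eqF.
  by apply: (mulIf (lt0r_neq0 lC)); rewrite divfK ?lt0r_neq0 //; lra.
Qed.

Lemma step_main Q : cand (rcons prev (u, es)) p' Q ->
  fv p' Q <= F /\ (0 < F -> fv p' Q < F).
Proof.
move=> cQ.
suff [h|[C [cC ne h1 h2]]] : fv p' Q <= 0 \/ exists C, [/\ cand prev p C, C != (u, es),
    (fv p C <= F -> fv p' Q <= F) & (fv p' Q = F -> fv p C = F)].
- by split; [exact: le_trans h F_ge0 | move=> hF; exact: le_lt_trans h hF].
- have hle := h1 (P_max cC); split => // hF; rewrite lt_neqAle hle andbT.
  by apply: contra_neq ne => e; apply: (P_unique hF cC (h2 e)).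
case: Q cQ => a q; rewrite /candidate covV_rcons covE_rcons /= /startp /endpt /=.
case/and5P => pq aC bC _ /andP[/allP iq /allP eq].
have [hab|hab] := leP (p' a) (p' (ep a q)).
  left; have lq : 0 < ln q by apply: len_gt0; case/and3P: pq.
  by rewrite /fval /startp /endpt /= ler_pdivrMr // mul0r subr_le0.
right; have [x [A lA]] := exists_lext aC; have [B rB] := exists_rext bC.
exact: dominating_candidate pq iq eq hab lA rB.
Qed.

End InductiveStep.

End Walks.

Lemma pot_rcons (R : realFieldType) (V E : finType) (src tgt : E -> V) (L : E -> R)
    s1 (s : seq (gpath V E)) P : s != [::] ->
  pot src tgt L s1 (rcons s P) = pstep src tgt L (pot src tgt L s1 s) P.
Proof. by case: s => // x s _; rewrite /pot /= foldl_rcons. Qed.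

Section Decomposition.
Variables (R : realFieldType) (V E : finType) (src tgt : E -> V) (L : E -> R).
Variables (s0 s1 : V) (Ps : seq (gpath V E)).
Hypotheses (Lpos : forall e, 0 < L e) (hPs : path_decomposition src tgt L s0 s1 Ps).
Local Notation f := (fP src tgt L s1 Ps).

Lemma decomposition_fP_ge0 i : (0 < i < size Ps)%N -> 0 <= f i.
Proof.
case: hPs => _ [_ [steps _]] /andP[i0 iS].
have [c _ _] := steps i (introT andP (conj i0 iS)).
by rewrite /fP gtn_eqF //; apply: (candidate_fval_ge0 Lpos c).
Qed.

Lemma decomposition_first_step : (1 < size Ps)%N -> f 1 < f 0.
Proof.
case: Ps hPs => [|[x es0] Ps'] [// _ [[/= hs0 hs1 hp0 hl0 huq] [steps _]]] h1.
have [c _ _] := steps 1%N h1; rewrite /startp /= in hs0; subst x.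
move: c; rewrite /fP /= take0 /pot /= => c; apply: (first_step_lt1 Lpos hp0 hs1 hl0 huq c).
Qed.

Lemma decomposition_step i : (i.+2 < size Ps)%N ->
  f i.+2 <= f i.+1 /\ (0 < f i.+1 -> f i.+2 < f i.+1).
Proof.
case: hPs => _ [_ [steps _]] hi; have hi' := ltnW hi.
have [c m uq] := steps i.+1 hi'; have [c2 _ _] := steps i.+2 hi.
have tne : take i.+1 Ps != [::] by case: (Ps) hi'.
move: c2; rewrite /fP /= (take_nth (s1, [::])) ?pot_rcons //.
move: c m uq; case: (nth (s1, [::]) Ps i.+1) => u es c m uq c2.
apply: (step_main Lpos c m uq c2).
Qed.

End Decomposition.

Lemma decreasing_until_zero (R : realDomainType) (f : nat -> R) (k : nat) :
  0 < f 0 -> (forall i, (0 < i <= k)%N -> 0 <= f i) ->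
  (forall i, (i < k)%N -> f i.+1 <= f i /\ (0 < f i -> f i.+1 < f i)) ->
  exists i0, [/\ (i0 <= k)%N, (forall i, (i < i0)%N -> f i.+1 < f i), 0 < f i0 &
                 (forall i, (i0 < i <= k)%N -> f i = 0)].
Proof.
move=> f0; elim: k => [|n IH] fge0 fstep.
  by exists 0%N; split => // i; rewrite ltnNge => /andP[/negP].
have [i0 [le_i0n dec pos zero]] := IH
  (fun i hi => fge0 i (introT andP (conj (proj1 (andP hi)) (leqW (proj2 (andP hi))))))
  (fun i hi => fstep i (leqW hi)).
have [fle flt] := fstep n (ltnSn n); have fn1 := fge0 n.+1 (leqnn n.+1).
have [e_i0n|ne_i0n] := eqVneq i0 n.
  subst i0; have [hp|hp] := ltrP 0 (f n.+1).
  - exists n.+1; split => //; last by move=> i; rewrite ltnNge => /andP[/negP].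
    by move=> i; rewrite ltnS leq_eqVlt => /orP[/eqP->|/dec]; [exact: flt|].
  - exists n; split => // i /andP[ni iS]; have -> : i = n.+1 by apply/eqP; rewrite eqn_leq iS.
    exact/le_anti/andP.
have lt_i0n : (i0 < n)%N by rewrite ltn_neqAle ne_i0n.
exists i0; split => //; first exact: leqW.
move=> i /andP[i0i]; rewrite leq_eqVlt ltnS => /orP[/eqP->|iS]; last exact/zero/andP.
have fn : f n = 0 by apply: zero; rewrite lt_i0n leqnn.
by apply/le_anti; rewrite fn1 -fn fle.
Qed.

Unset Implicit Arguments. Set Strict Implicit. Set Printing Implicit Defensive.

Theorem mainTheorem13 (R : realFieldType) (V E : finType)
    (src tgt : E -> V) (L : E -> R) (s0 s1 : V) (Ps : seq (V * seq E)) :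
  connected src tgt ->
  s0 != s1 ->
  (forall e, 0 < L e) ->
  path_decomposition src tgt L s0 s1 Ps ->
  let k := (size Ps).-1 in
  let f := fP src tgt L s1 Ps in
  exists i0 : nat,
    [/\ (i0 <= k)%N,
        (forall i, (i < i0)%N -> f i.+1 < f i),
        0 < f i0 &
        (forall i, (i0 < i <= k)%N -> f i = 0)].
Proof.
move=> _ _ Lpos hPs k f.
have lt_size i : (i <= k)%N -> (i < size Ps)%N.
  by case: hPs => Ps_ne _; rewrite /k -ltnS prednK.
apply: decreasing_until_zero.
- by rewrite /f /fP ltr01.
- move=> i /andP[i_gt0 i_le_k]; apply: (decomposition_fP_ge0 Lpos hPs).
  by rewrite i_gt0 lt_size.
- case=> [|i] i_lt_k.
  + have f1_lt := decomposition_first_step Lpos hPs (lt_size 1%N i_lt_k).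
    by split=> [|_ //]; apply: ltW.
  + exact: (decomposition_step Lpos hPs (lt_size _ i_lt_k)).
Qed.
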